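(* Let $\{\mathcal T^+,\mathcal T^-\}$ be a closed orientation of a medium with $n$ states. Then for any state $S$, at most $\log_2 n$ tokens in $\mathcal T^+$ are effective for $S$.
   Context: A medium consists of a finite set of states and a set $\mathcal T$ of tokens, each token $t$ acting as a function on states, written $S\mapsto St$. Tokens concatenate into messages (words); $Sw$ denotes the state obtained by applying the tokens of $w$ successively to $S$. A token $t$ has a reverse $\tilde t$ if for any two distinct states $S\neq Q$, $St=Q$ iff $Q\tilde t=S$. A message is inconsistent if it contains some token together with its reverse, and consistent otherwise. A message $w$ is vacuous if for each token $t$ it contains equally many copies of $t$ and $\tilde t$. A token $t$ is effective for $S$ if $St\neq S$; a message is stepwise effective for $S$ if each successive token is effective for the state it is applied to. The axioms of a medium are: (1) each token has a unique reverse; (2) for any two distinct states $S,Q$ there is a consistent message $w$ with $Sw=Q$; (3) if $w$ is stepwise effective for $S$, then $Sw=S$ iff $w$ is vacuous; (4) if $Sw=Qz$, $w$ is stepwise effective for $S$, $z$ is stepwise effective for $Q$, and both $w,z$ are consistent, then $wz$ is consistent. An orientation is a partition $\{\mathcal T^+,\mathcal T^-\}$ of $\mathcal T$ such that for each token $t$ exactly one of $t,\tilde t$ lies in $\mathcal T^+$ (the positive tokens). An orientation is closed if whenever two positive tokens $t,t'$ are both effective for a state $S$, the messages $tt'$ and $t't$ are stepwise effective for $S$. *)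

From mathcomp Require Import all_boot.
Set Implicit Arguments. Unset Strict Implicit. Unset Printing Implicit Defensive.

Section Media.
Variables (St Tok : finType) (act : St -> Tok -> St).

Definition apply_msg (S : St) (w : seq Tok) : St := foldl act S w.

Definition is_reverse (t t' : Tok) : Prop :=
  forall S Q : St, S <> Q -> (act S t = Q <-> act Q t' = S).

Definition inconsistent (w : seq Tok) : Prop :=
  exists t t', is_reverse t t' /\ t \in w /\ t' \in w.
Definition consistent (w : seq Tok) : Prop := ~ inconsistent w.

Definition vacuous (w : seq Tok) : Prop :=
  forall t t', is_reverse t t' -> count_mem t w = count_mem t' w.

Definition effective (S : St) (t : Tok) : bool := act S t != S.

Fixpoint stepwise_effective (S : St) (w : seq Tok) : bool :=
  match w with
  | [::] => true
  | t :: w' => effective S t && stepwise_effective (act S t) w'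
  end.

Definition is_medium : Prop :=
  [/\ (forall t, exists! t', is_reverse t t'),
      (forall S Q, S <> Q -> exists w, consistent w /\ apply_msg S w = Q),
      (forall S w, stepwise_effective S w -> (apply_msg S w = S <-> vacuous w))
    & (forall S Q w z, apply_msg S w = apply_msg Q z ->
         stepwise_effective S w -> stepwise_effective Q z ->
         consistent w -> consistent z -> consistent (w ++ z))].

(* pos = T^+ ; exactly one of t, reverse(t) is positive *)
Definition orientation (pos : pred Tok) : Prop :=
  forall t t', is_reverse t t' -> (pos t <-> ~~ pos t').

Definition closed_orientation (pos : pred Tok) : Prop :=
  orientation pos /\
  forall S t t', t != t' -> pos t -> pos t' -> effective S t -> effective S t' ->
    stepwise_effective S [:: t; t'] /\ stepwise_effective S [:: t'; t].

End Media.

From mathcomp Require Import all_boot.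

(* Closedness makes every set A of positive tokens effective for S stepwise
   effective in any order, so A determines the state S A.  If S A = S B and
   t is in A but not in B, then A followed by the reversal of B is a
   stepwise effective loop at S, hence vacuous by axiom (3); but t occurs in
   it while its reverse, a negative token that is not the reverse of any
   token of B, does not.  So A |-> S A is injective on the 2^k subsets. *)

Set Implicit Arguments. Unset Strict Implicit. Unset Printing Implicit Defensive.

Section Messages.
Variables (St Tok : finType) (act : St -> Tok -> St).

Lemma is_reverse_sym t t' : is_reverse act t t' -> is_reverse act t' t.
Proof. by move=> rt S Q neSQ; have := rt Q S (nesym neSQ); tauto. Qed.

Lemma apply_msg_cat S w z :
  apply_msg act S (w ++ z) = apply_msg act (apply_msg act S w) z.
Proof. exact: foldl_cat. Qed.

Lemma stepwise_effective_cat S w z :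
  stepwise_effective act S (w ++ z) =
  stepwise_effective act S w && stepwise_effective act (apply_msg act S w) z.
Proof. by elim: w S => [|t w IHw] S //=; rewrite IHw andbA. Qed.

Lemma reverse_cancel S t t' :
  is_reverse act t t' -> effective act S t -> act (act S t) t' = S.
Proof. by move=> rt /eqP effSt; apply/(rt S (act S t)) => // /esym. Qed.

Lemma stepwise_effective_undo
    (has_reverse : forall t, exists t', is_reverse act t t') S w :
  stepwise_effective act S w -> exists u,
  [/\ stepwise_effective act (apply_msg act S w) u,
      apply_msg act (apply_msg act S w) u = S &
      forall x, x \in u -> exists2 t, t \in w & is_reverse act t x].
Proof.
elim: w S => [|t w IHw] S /=; first by exists [::].
case/andP=> effSt sew; have [u [seu Su revu]] := IHw _ sew.
have [t' rt] := has_reverse t.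
have back := reverse_cancel rt effSt.
exists (u ++ [:: t']); split.
- rewrite stepwise_effective_cat seu /= andbT /effective.
  by rewrite -/(apply_msg act (act S t) w) Su back eq_sym.
- by rewrite apply_msg_cat -/(apply_msg act (act S t) w) Su.
- move=> x; rewrite mem_cat inE => /orP[/revu[b bw rb] | /eqP->].
    by exists b; rewrite // inE bw orbT.
  by exists t; rewrite ?inE ?eqxx.
Qed.

Lemma is_reverse_inj
    (unique_reverse : forall t, exists! t', is_reverse act t t') t1 t2 x :
  is_reverse act t1 x -> is_reverse act t2 x -> t1 = t2.
Proof.
move=> /is_reverse_sym r1 /is_reverse_sym r2.
by have [y [_ uy]] := unique_reverse x; rewrite -(uy _ r1) (uy _ r2).
Qed.

Variable pos : pred Tok.

Definition positive_effective S := [set t | pos t && effective act S t].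

Section ClosedOrientation.
Hypothesis closed : closed_orientation act pos.

Lemma positive_effective_stepwise S w :
  uniq w -> {subset w <= positive_effective S} -> stepwise_effective act S w.
Proof.
elim: w S => [|t w IHw] S //= /andP[tw uw] sw.
have /[!inE] /andP[pt effSt] := sw t (mem_head t w).
rewrite effSt /=; apply: IHw => // t' t'w.
have /[!inE] /andP[pt' effSt'] : t' \in positive_effective S.
  by apply: sw; rewrite inE t'w orbT.
have net : t != t' by apply: contraNneq tw => ->.
have [/and3P[_ effStt' _] _] := closed.2 S t t' net pt pt' effSt effSt'.
by rewrite pt'.
Qed.

Lemma enum_stepwise_effective S (A : {set Tok}) :
  A \subset positive_effective S -> stepwise_effective act S (enum A).
Proof.
move=> sA; apply: positive_effective_stepwise (enum_uniq A) _ => t.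
by rewrite mem_enum; apply: (subsetP sA).
Qed.

Hypothesis medium : is_medium act.

Lemma apply_enum_subset S (A B : {set Tok}) :
  A \subset positive_effective S -> B \subset positive_effective S ->
  apply_msg act S (enum A) = apply_msg act S (enum B) -> A \subset B.
Proof.
have [unique_reverse _ loop_vacuous _] := medium.
have has_reverse t : exists t', is_reverse act t t'.
  by have [t' [rt _]] := unique_reverse t; exists t'.
move=> sA sB SAB; apply/subsetP => t tA; apply/negPn/negP => tB.
have [u [seu Su revu]] :=
  stepwise_effective_undo has_reverse (enum_stepwise_effective sB).
have seAu : stepwise_effective act S (enum A ++ u).
  by rewrite stepwise_effective_cat enum_stepwise_effective // SAB.
have vac : vacuous act (enum A ++ u).
  by apply/(loop_vacuous _ _ seAu); rewrite apply_msg_cat SAB.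
have [t' rt] := has_reverse t.
have /[!inE] /andP[pt _] := subsetP sA t tA.
have npt' : ~~ pos t' by apply/(closed.1 t t' rt).
have t'Au : t' \notin enum A ++ u.
  rewrite mem_cat mem_enum negb_or; apply/andP; split.
    by apply: contra npt' => /(subsetP sA); rewrite inE => /andP[].
  apply/negP => /revu[b bB rb]; move: bB.
  by rewrite (is_reverse_inj unique_reverse rb rt) mem_enum (negbTE tB).
have := vac t t' rt; rewrite (count_memPn t'Au) => /eqP.
by rewrite -leqn0 leqNgt -has_count has_pred1 mem_cat mem_enum tA.
Qed.

Lemma apply_enum_inj S :
  {in powerset (positive_effective S) &,
    injective (fun A : {set Tok} => apply_msg act S (enum A))}.
Proof.
move=> A B /[!inE] sA sB SAB; apply/eqP; rewrite eqEsubset.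
by rewrite (apply_enum_subset sA sB SAB) (apply_enum_subset sB sA (esym SAB)).
Qed.

End ClosedOrientation.
End Messages.

Theorem mainTheorem6 (St Tok : finType) (act : St -> Tok -> St) (pos : pred Tok) :
  is_medium act -> closed_orientation act pos ->
  forall S : St, 2 ^ #|[pred t | pos t && effective act S t]| <= #|St|.
Proof.
move=> medium closed S.
have -> : #|[pred t | pos t && effective act S t]| = #|positive_effective act pos S|.
  by apply: eq_card => t; rewrite !inE.
rewrite -card_powerset -(card_in_imset (apply_enum_inj closed medium (S := S))).
exact: max_card.
Qed.
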